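(* Let $A\in\mathbb{C}^{n\times n}$ be Hermitian and $\beta>0$, and consider $f(\mathbf{z})=\frac12\mathbf{z}^*A\mathbf{z}+\frac{\beta}{2}\sum_{k=1}^n|z_k|^4$ on $\mathbb{CS}^{n-1}=\{\mathbf{z}\in\mathbb{C}^n:\|\mathbf{z}\|_2=1\}$. Let $\mathbf{z}\in\mathbb{CS}^{n-1}$ be a stationary point of $\min_{\mathbf{z}\in\mathbb{CS}^{n-1}}f(\mathbf{z})$, i.e. $[A+2\beta\,\mathrm{diag}(|\mathbf{z}|^2)]\mathbf{z}=2\lambda\mathbf{z}$ with $\lambda=\frac12\mathbf{z}^*A\mathbf{z}+\beta\|\mathbf{z}\|_4^4$, and suppose that $H:=A+2\beta\,\mathrm{diag}(|\mathbf{z}|^2)-2\lambda I$ is positive semidefinite. Then $\mathbf{z}$ is a global minimizer of $f$ on $\mathbb{CS}^{n-1}$, and every global minimizer $\mathbf{y}$ of $f$ on $\mathbb{CS}^{n-1}$ belongs to $\llbracket\mathbf{z}\rrbracket=\{\mathbf{y}\in\mathbb{C}^n:|y_k|=|z_k|\ \forall k\in[n]\}$.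
   Context: $|\mathbf{z}|^2$ denotes the componentwise squared modulus vector $(|z_1|^2,\dots,|z_n|^2)$, $\mathrm{diag}(\mathbf{x})$ the diagonal matrix with diagonal $\mathbf{x}$, $[n]=\{1,\dots,n\}$, $\|\mathbf{z}\|_4^4=\sum_k|z_k|^4$. *)

From mathcomp Require Import all_boot all_algebra complex reals.
Import GRing.Theory Num.Theory.
Set Implicit Arguments. Unset Strict Implicit. Unset Printing Implicit Defensive.
Local Open Scope ring_scope.

Section Defs.
Variable C : numClosedFieldType.
Variable n : nat.

Definition hermitian_mx (A : 'M[C]_n) : Prop := forall i j, A j i = (A i j)^*.

Definition qform (M : 'M[C]_n) (v : 'cV[C]_n) : C :=
  \sum_(i < n) \sum_(j < n) (v i 0)^* * M i j * v j 0.

Definition sqnorm2 (v : 'cV[C]_n) : C := \sum_(i < n) `|v i 0| ^+ 2.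

Definition on_sphere (v : 'cV[C]_n) : Prop := sqnorm2 v = 1.

Definition norm4_4 (v : 'cV[C]_n) : C := \sum_(k < n) `|v k 0| ^+ 4.

Definition sqmod (v : 'cV[C]_n) : 'rV[C]_n := \row_k (`|v k 0| ^+ 2).

Definition fobj (A : 'M[C]_n) (beta : C) (v : 'cV[C]_n) : C :=
  2^-1 * qform A v + beta / 2 * norm4_4 v.

Definition psd (M : 'M[C]_n) : Prop := forall v : 'cV[C]_n, 0 <= qform M v.

Definition global_minimizer (A : 'M[C]_n) (beta : C) (v : 'cV[C]_n) : Prop :=
  on_sphere v /\ forall y, on_sphere y -> fobj A beta v <= fobj A beta y.

Definition same_moduli (z y : 'cV[C]_n) : Prop := forall k, `|y k 0| = `|z k 0|.

End Defs.

(* For y on the sphere, expanding with y^* y = 1 gives the exact identity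
     f(y) - f(z) = 1/2 y^* H y + beta/2 sum_k (|y_k|^2 - |z_k|^2)^2,
   and both terms are nonnegative when H is positive semidefinite.  Hence
   f(y) >= f(z), with equality only if |y_k| = |z_k| for every k. *)
From mathcomp Require Import all_boot all_algebra complex reals.
From mathcomp Require Import order ring.
Import Order.TTheory GRing.Theory Num.Theory.
Set Implicit Arguments. Unset Strict Implicit. Unset Printing Implicit Defensive.
Local Open Scope ring_scope.

Section QuadraticForm.
Variables (C : numClosedFieldType) (n : nat).
Implicit Types (M N : 'M[C]_n) (v : 'cV[C]_n).

Lemma qformD M N v : qform (M + N) v = qform M v + qform N v.
Proof.
rewrite /qform -big_split; apply: eq_bigr => i _.
by rewrite -big_split; apply: eq_bigr => j _; rewrite mxE /=; ring.
Qed.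

Lemma qformB M N v : qform (M - N) v = qform M v - qform N v.
Proof.
rewrite /qform -sumrB; apply: eq_bigr => i _.
by rewrite -sumrB; apply: eq_bigr => j _; rewrite !mxE /=; ring.
Qed.

Lemma qformZ (c : C) M v : qform (c *: M) v = c * qform M v.
Proof.
rewrite /qform mulr_sumr; apply: eq_bigr => i _.
by rewrite mulr_sumr; apply: eq_bigr => j _; rewrite mxE /=; ring.
Qed.

Lemma qform_diag_mx (d : 'rV[C]_n) v :
  qform (diag_mx d) v = \sum_(i < n) `|v i 0| ^+ 2 * d 0 i.
Proof.
apply: eq_bigr => i _; rewrite (bigD1 i) //= big1 ?addr0.
  by rewrite mxE eqxx mulr1n normCK; ring.
by move=> j /negbTE ji; rewrite mxE eq_sym ji mulr0n mulr0 mul0r.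
Qed.

Lemma qform_scalar_mx (a : C) v : qform a%:M v = a * sqnorm2 v.
Proof.
rewrite -diag_const_mx qform_diag_mx /sqnorm2 mulr_sumr.
by apply: eq_bigr => i _; rewrite mxE mulrC.
Qed.

End QuadraticForm.

Section ModuliDistance.
Variables (C : numClosedFieldType) (n : nat).
Implicit Types (y z : 'cV[C]_n).

Definition sqmod_dist y z : C := \sum_(k < n) (`|y k 0| ^+ 2 - `|z k 0| ^+ 2) ^+ 2.

Lemma sqr_sqnormB_ge0 (a b : C) : 0 <= (`|a| ^+ 2 - `|b| ^+ 2) ^+ 2.
Proof. by rewrite -realEsqr rpredB ?rpredX ?normr_real. Qed.

Lemma sqmod_dist_ge0 y z : 0 <= sqmod_dist y z.
Proof. by apply: sumr_ge0 => k _; apply: sqr_sqnormB_ge0. Qed.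

Lemma sqmod_dist_eq0 y z : sqmod_dist y z = 0 -> same_moduli z y.
Proof.
move=> /psumr_eq0P d0 k; have /eqP := d0 (fun j _ => sqr_sqnormB_ge0 _ _) k isT.
by rewrite sqrf_eq0 subr_eq0 eqrXn2 // => /eqP.
Qed.

Lemma sqmod_distE y z : sqmod_dist y z =
  norm4_4 y - 2 * qform (diag_mx (sqmod z)) y + norm4_4 z.
Proof.
rewrite qform_diag_mx /sqmod_dist /norm4_4 mulr_sumr -sumrB -big_split.
by apply: eq_bigr => k _ /=; rewrite mxE; ring.
Qed.

End ModuliDistance.

Section Objective.
Variables (C : numClosedFieldType) (n : nat).
Variables (A : 'M[C]_n) (beta : C) (z : 'cV[C]_n).

Let lambda := 2^-1 * qform A z + beta * norm4_4 z.
Let H := A + 2 * beta *: diag_mx (sqmod z) - (2 * lambda)%:M.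

Lemma fobj_subE y : on_sphere y ->
  fobj A beta y - fobj A beta z = 2^-1 * qform H y + beta / 2 * sqmod_dist y z.
Proof.
move=> y1; rewrite sqmod_distE qformB qformD qformZ qform_scalar_mx y1.
rewrite /fobj /lambda; set D := qform _ y.
by field; rewrite ?pnatr_eq0 ?oner_eq0.
Qed.

Hypothesis H_psd : psd H.

Lemma fobj_sub_ge y : on_sphere y ->
  beta / 2 * sqmod_dist y z <= fobj A beta y - fobj A beta z.
Proof. by move=> y1; rewrite fobj_subE // lerDr mulr_ge0 ?invr_ge0 ?ler0n. Qed.

Lemma fobj_ge y : 0 <= beta -> on_sphere y -> fobj A beta z <= fobj A beta y.
Proof.
move=> beta_ge0 y1; rewrite -subr_ge0; apply: le_trans (fobj_sub_ge y1).
by rewrite mulr_ge0 ?divr_ge0 ?ler0n ?sqmod_dist_ge0.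
Qed.

Lemma fobj_le_same_moduli y : 0 < beta -> on_sphere y ->
  fobj A beta y <= fobj A beta z -> same_moduli z y.
Proof.
move=> beta_gt0 y1 fyz; apply: sqmod_dist_eq0; apply/eqP.
rewrite eq_le sqmod_dist_ge0 andbT -(pmulr_rle0 _ (divr_gt0 beta_gt0 (ltr0n _ 2))).
by apply: le_trans (fobj_sub_ge y1) _; rewrite subr_le0.
Qed.

End Objective.

Theorem theorem1 (R : realType) (n : nat) (A : 'M[R[i]]_n) (beta : R)
  (z : 'cV[R[i]]_n) :
  hermitian_mx A -> 0 < beta -> on_sphere z ->
  let lambda := 2^-1 * qform A z + (beta%:C)%C * norm4_4 z in
  (A + 2 * (beta%:C)%C *: diag_mx (sqmod z)) *m z = (2 * lambda) *: z ->
  psd (A + 2 * (beta%:C)%C *: diag_mx (sqmod z) - (2 * lambda)%:M) ->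
  global_minimizer A (beta%:C)%C z /\
  (forall y : 'cV[R[i]]_n, global_minimizer A (beta%:C)%C y -> same_moduli z y).
Proof.
move=> _ beta_gt0 z1 lambda _ H_psd.
have betaC_gt0 : 0 < (beta%:C)%C by rewrite ltcR.
have z_min := fobj_ge H_psd (ltW betaC_gt0).
split; first by split.
move=> y [y1 y_min].
have := fobj_le_same_moduli H_psd betaC_gt0 y1.
by apply; apply: y_min.
Qed.
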